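(* Let $(X,d)$ be a metric space, $0<\rho<1$, and $\mu:X^k\to X$ a coordinatewise $\rho$-contractive $k$-mean. Then $\mu$ is weakly $\beta$-contractive.
   Context: A $k$-mean is a map $\mu:X^k\to X$ with $\mu(x,\ldots,x)=x$. It is coordinatewise $\rho$-contractive if $d(\mu(\mathbf{x}),\mu(\mathbf{y}))\le\rho\,d(x_j,y_j)$ whenever $\mathbf{x},\mathbf{y}\in X^k$ differ only in the $j$-th coordinate. The barycentric operator $\beta:X^{k+1}\to X^{k+1}$ is $\beta(\mathbf{x})_j=\mu(x_1,\ldots,x_{j-1},x_{j+1},\ldots,x_{k+1})$. For $\mathbf{x}\in X^{k+1}$, $\Delta(\mathbf{x})=\max_{i,j}d(x_i,x_j)$. $\mu$ is weakly $\beta$-contractive if $\lim_n\Delta(\beta^n(\mathbf{x}))=0$ for every $\mathbf{x}\in X^{k+1}$. *)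

From Stdlib Require Import Reals.
From mathcomp Require Import ssreflect ssrfun ssrbool eqtype ssrnat seq fintype bigop.

Set Implicit Arguments.
Unset Strict Implicit.
Unset Printing Implicit Defensive.

Local Open Scope R_scope.

Definition is_metric (X : Type) (d : X -> X -> R) : Prop :=
  (forall x y, 0 <= d x y) /\
  (forall x y, d x y = 0 <-> x = y) /\
  (forall x y, d x y = d y x) /\
  (forall x y z, d x z <= d x y + d y z).

Definition is_mean (X : Type) (k : nat) (mu : ('I_k -> X) -> X) : Prop :=
  forall x : X, mu (fun _ => x) = x.

Definition coord_contractive (X : Type) (d : X -> X -> R) (k : nat)
    (rho : R) (mu : ('I_k -> X) -> X) : Prop :=
  forall (x y : 'I_k -> X) (j : 'I_k),
    (forall i, i != j -> x i = y i) ->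
    d (mu x) (mu y) <= rho * d (x j) (y j).

(* Barycentric operator: beta(x)_j = mu(x with j-th coordinate removed).
   [lift j] enumerates the indices of 'I_k.+1 other than j, in increasing order. *)
Definition beta (X : Type) (k : nat) (mu : ('I_k -> X) -> X)
    (x : 'I_k.+1 -> X) : 'I_k.+1 -> X :=
  fun j => mu (fun i => x (lift j i)).

(* Delta(x) = max_{i,j} d(x_i, x_j)  (distances are >= 0, so 0 is a neutral base). *)
Definition Delta (X : Type) (d : X -> X -> R) (n : nat) (x : 'I_n -> X) : R :=
  \big[Rmax/0]_(i < n) \big[Rmax/0]_(j < n) d (x i) (x j).

Definition weakly_beta_contractive (X : Type) (d : X -> X -> R) (k : nat)
    (mu : ('I_k -> X) -> X) : Prop :=
  forall x : 'I_k.+1 -> X,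
    Un_cv (fun n => Delta d (iter n (beta mu) x)) 0.

(* Removing coordinate j or coordinate j+1 of z gives two k-tuples that differ
   only in position j, where they hold z_(j+1) and z_j.  Hence every adjacent
   distance of beta(z) is at most rho times the corresponding adjacent distance
   of z, so after n steps adjacent distances are at most rho^n Delta(x), and by
   the triangle inequality Delta(beta^n x) <= k rho^n Delta(x). *)
From Pilot Require Import Defs.
From Stdlib Require Import Reals Lra.
From Coquelicot Require Lim_seq.
From mathcomp Require Import ssreflect ssrfun ssrbool eqtype ssrnat seq fintype bigop.

Set Implicit Arguments.
Unset Strict Implicit.

Local Open Scope R_scope.

(* [Defs.Delta] is qualified because Stdlib's Reals also exports a [Delta]. *)

Lemma bigRmax_ge0 (I : Type) (r : seq I) (F : I -> R) :
  0 <= \big[Rmax/0]_(i <- r) F i.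
Proof.
elim: r => [|a r IH]; first by rewrite big_nil; lra.
by rewrite big_cons; apply: Rle_trans IH (Rmax_r _ _).
Qed.

Lemma le_bigRmax (I : eqType) (r : seq I) (F : I -> R) (i : I) :
  i \in r -> F i <= \big[Rmax/0]_(j <- r) F j.
Proof.
elim: r => [|a r IH] //; rewrite in_cons big_cons => /orP [/eqP -> | ir].
  exact: Rmax_l.
exact: Rle_trans (IH ir) (Rmax_r _ _).
Qed.

Lemma bigRmax_le (I : Type) (r : seq I) (F : I -> R) (c : R) :
  0 <= c -> (forall i, F i <= c) -> \big[Rmax/0]_(j <- r) F j <= c.
Proof.
move=> c_ge0 Fc; elim: r => [|a r IH]; first by rewrite big_nil.
by rewrite big_cons; apply: Rmax_lub.
Qed.

Section Diameter.

Variables (X : Type) (d : X -> X -> R) (n : nat).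

Lemma Delta_ge0 (x : 'I_n -> X) : 0 <= Defs.Delta d x.
Proof. exact: bigRmax_ge0. Qed.

Lemma le_Delta (x : 'I_n -> X) (i j : 'I_n) : d (x i) (x j) <= Defs.Delta d x.
Proof.
apply: Rle_trans (@le_bigRmax _ _ (fun i => \big[Rmax/0]_(j < n) d (x i) (x j))
                              i (mem_index_enum i)).
exact: (@le_bigRmax _ _ (fun j => d (x i) (x j)) j (mem_index_enum j)).
Qed.

Lemma Delta_le (x : 'I_n -> X) (c : R) :
  0 <= c -> (forall i j, d (x i) (x j) <= c) -> Defs.Delta d x <= c.
Proof. by move=> c_ge0 xc; apply: bigRmax_le => // i; apply: bigRmax_le. Qed.

End Diameter.

Section AdjacentDistances.

Variables (X : Type) (d : X -> X -> R).
Hypothesis d_metric : is_metric d.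

Lemma dist_inord_add (n : nat) (y : 'I_n.+1 -> X) (B : R) :
    (forall j, (j < n)%N -> d (y (inord j)) (y (inord j.+1)) <= B) ->
  forall m a, (a + m <= n)%N -> d (y (inord a)) (y (inord (a + m))) <= INR m * B.
Proof.
have [_ [d_eq0 [_ d_triangle]]] := d_metric.
move=> y_adj; elim=> [|m IH] a am_le.
  by rewrite addn0 (proj2 (d_eq0 _ _) erefl) /=; lra.
rewrite S_INR addnS in am_le *.
apply: Rle_trans (d_triangle _ (y (inord (a + m))) _) _.
have := IH a (ltnW am_le); have := y_adj _ am_le; lra.
Qed.

Lemma Delta_le_adjacent (n : nat) (y : 'I_n.+1 -> X) (B : R) :
    0 <= B -> (forall j, (j < n)%N -> d (y (inord j)) (y (inord j.+1)) <= B) ->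
  Defs.Delta d y <= INR n * B.
Proof.
have [_ [_ [d_sym _]]] := d_metric.
move=> B_ge0 y_adj; apply: Delta_le; first by apply: Rmult_le_pos; first exact: pos_INR.
suff ordered (i j : 'I_n.+1) : (i <= j)%N -> d (y i) (y j) <= INR n * B.
  by move=> i j; case: (leqP i j) => [/ordered //| /ltnW ji]; rewrite d_sym; apply: ordered.
move=> ij; have ij_le : (i + (j - i) <= n)%N by rewrite subnKC // -ltnS.
have := dist_inord_add y_adj ij_le; rewrite subnKC // !inord_val => dij.
apply: Rle_trans dij _; apply: Rmult_le_compat_r => //; apply/le_INR/leP.
by rewrite -ltnS (leq_ltn_trans (leq_subr i j)).
Qed.

End AdjacentDistances.

Section LiftInord.

Variables (k j : nat).
Hypothesis jk : (j < k)%N.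

Let jk1 : (j < k.+1)%N := ltnW jk.

Lemma lift_inord_succ (i : 'I_k) :
  val i != j -> lift (inord j) i = lift (inord j.+1) i :> 'I_k.+1.
Proof. by move=> ij; apply: val_inj; rewrite /= /bump !inordK //; case: ltngtP ij. Qed.

Lemma lift_inord_at : lift (inord j) (Ordinal jk) = inord j.+1 :> 'I_k.+1.
Proof. by apply: val_inj; rewrite /= /bump !inordK // leqnn. Qed.

Lemma lift_inord_succ_at : lift (inord j.+1) (Ordinal jk) = inord j :> 'I_k.+1.
Proof. by apply: val_inj; rewrite /= /bump !inordK // ltnn. Qed.

End LiftInord.

Section Barycentric.

Variables (X : Type) (d : X -> X -> R) (k : nat) (rho : R) (mu : ('I_k -> X) -> X).
Hypothesis d_metric : is_metric d.
Hypothesis mu_contractive : coord_contractive d rho mu.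

Lemma beta_adjacent (z : 'I_k.+1 -> X) (j : nat) : (j < k)%N ->
  d (beta mu z (inord j)) (beta mu z (inord j.+1))
    <= rho * d (z (inord j)) (z (inord j.+1)).
Proof.
have [_ [_ [d_sym _]]] := d_metric.
move=> jk; rewrite (d_sym (z (inord j))).
have := @mu_contractive (fun i => z (lift (inord j) i))
                        (fun i => z (lift (inord j.+1) i)) (Ordinal jk).
rewrite lift_inord_at lift_inord_succ_at; apply=> i ij.
by rewrite lift_inord_succ.
Qed.

Lemma iter_beta_adjacent (x : 'I_k.+1 -> X) (n j : nat) : 0 <= rho -> (j < k)%N ->
  d (iter n (beta mu) x (inord j)) (iter n (beta mu) x (inord j.+1))
    <= rho ^ n * Defs.Delta d x.
Proof.
move=> rho_ge0 jk; elim: n => [|n IH]; first by rewrite /= Rmult_1_l; apply: le_Delta.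
rewrite iterS; apply: Rle_trans (beta_adjacent _ jk) _.
by rewrite /= Rmult_assoc; apply: Rmult_le_compat_l.
Qed.

Lemma Delta_iter_beta_le (x : 'I_k.+1 -> X) (n : nat) : 0 <= rho ->
  Defs.Delta d (iter n (beta mu) x) <= INR k * Defs.Delta d x * rho ^ n.
Proof.
move=> rho_ge0; rewrite Rmult_assoc (Rmult_comm (Defs.Delta d x)).
apply: Delta_le_adjacent => // [|j]; last exact: iter_beta_adjacent.
by apply: Rmult_le_pos; [apply: pow_le | apply: Delta_ge0].
Qed.

End Barycentric.

Lemma Un_cv_geometric_squeeze (u : nat -> R) (C q : R) :
  Rabs q < 1 -> (forall n, 0 <= u n <= C * q ^ n) -> Un_cv u 0.
Proof.
move=> q_lt1 u_bound; apply/Lim_seq.is_lim_seq_Reals.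
apply: (Lim_seq.is_lim_seq_le_le (fun _ => 0) u (fun n => C * q ^ n)) => //.
  exact: Lim_seq.is_lim_seq_const.
have := Lim_seq.is_lim_seq_scal_l _ C _ (Lim_seq.is_lim_seq_geom q q_lt1).
by rewrite /= Rmult_0_r.
Qed.

Theorem lemma3p8 (X : Type) (d : X -> X -> R) (k : nat) (rho : R)
    (mu : ('I_k -> X) -> X) :
  is_metric d ->
  (0 < rho < 1)%R ->
  is_mean mu ->
  coord_contractive d rho mu ->
  weakly_beta_contractive d mu.
Proof.
move=> d_metric [rho_gt0 rho_lt1] _ mu_contractive x.
apply: (Un_cv_geometric_squeeze (C := INR k * Defs.Delta d x) (q := rho)).
  by rewrite Rabs_pos_eq; lra.
move=> n; split; first exact: Delta_ge0.
by apply: Delta_iter_beta_le => //; lra.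
Qed.
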